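(* Two groups $k,k'\in[K]$ are oracle-equivalent if and only if the optimal loss $l^*((1-\alpha)\mathbf{e}_k+\alpha\mathbf{e}_{k'})$ is constant for all $\alpha\in[0,1]$.
   Context: $K$ groups with fixed distributions $D_k$ over $\mathcal{X}\times\mathcal{Y}$; hypothesis class $\mathcal{H}$, loss $\mathcal{L}:\mathcal{Y}\times\mathcal{Y}\to\mathbb{R}$. For $\mathbf{p}\in\Delta^K$, $D_{\mathbf{p}}=\sum_jp_jD_j$, $\mathcal{L}_{\mathbf{p}}(h)=\mathbb{E}_{D_{\mathbf{p}}}[\mathcal{L}(h(x),y)]$, $\mathcal{L}_{D_j}(h)=\mathcal{L}_j(h)=\mathbb{E}_{D_j}[\mathcal{L}(h(x),y)]$, and $l^*(\mathbf{p})=\min_{h\in\mathcal{H}}\mathcal{L}_{\mathbf{p}}(h)$ (minima assumed attained). $\mathbf{e}_j$ is the $j$-th vertex of the simplex. A set $K^*\subseteq[K]$ is oracle-equivalent if there exists $h\in\bigcap_{j\in K^*}\arg\min_{h'\in\mathcal{H}}\mathcal{L}_{D_j}(h')$ with $\mathcal{L}_{j_1}(h)=\mathcal{L}_{j_2}(h)$ for all $j_1,j_2\in K^*$. *)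

From HB Require Import structures.
From mathcomp Require Import all_boot all_order all_algebra.
From mathcomp Require Import all_classical all_reals all_analysis.
Set Implicit Arguments. Unset Strict Implicit. Unset Printing Implicit Defensive.
Import Order.TTheory GRing.Theory Num.Theory.
Local Open Scope classical_set_scope.
Local Open Scope ring_scope.

Definition simplex (R : realType) (K : nat) : set ('I_K -> R) :=
  [set p | (forall j, 0 <= p j) /\ \sum_(j < K) p j = 1].

Definition vertex (R : realType) (K : nat) (j : 'I_K) : 'I_K -> R :=
  fun i => (i == j)%:R.
Arguments simplex R K : clear implicits.
Arguments vertex R {K} j.

(* Mixture D_p = sum_j p_j D_j of measures.  The weights are clipped at 0
   (max (p j) 0) only so that D_p is a measure for every p; on the simplex
   this is exactly sum_j p_j D_j. *)
Section mixture.
Local Open Scope ereal_scope.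
Context d (T : measurableType d) (R : realType) (K : nat).
Variables (D : 'I_K -> {measure set T -> \bar R}) (p : 'I_K -> R).

Definition mixture (A : set T) : \bar R :=
  \sum_(j < K) (Num.max (p j) 0%R)%:E * D j A.

Let mixture0 : mixture set0 = 0.
Proof. by rewrite /mixture big1// => j _; rewrite measure0 mule0. Qed.

Let mixture_ge0 B : 0 <= mixture B.
Proof.
rewrite /mixture; apply: sume_ge0 => j _; apply: mule_ge0 => //.
by rewrite lee_fin le_max lexx orbT.
Qed.

Let mixture_sigma_additive : semi_sigma_additive mixture.
Proof.
move=> F mF tF mUF.
have w0 j : (0 <= Num.max (p j) 0)%R by rewrite le_max lexx orbT.
pose m := msum (fun n => if (n < K)%N =P true is ReflectT h
  then mscale (NngNum (w0 (Ordinal h))) (D (Ordinal h)) else mzero) K.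
have -> : mixture = m.
  apply/funext => A; rewrite /m /= /msum /mixture; apply: eq_bigr => j _.
  case: eqP => h /=; last by rewrite ltn_ord in h.
  rewrite /mscale /=; have -> : Ordinal h = j by exact: val_inj.
  by [].
exact: measure_semi_sigma_additive.
Qed.

HB.instance Definition _ := isMeasure.Build _ _ _ mixture
  mixture0 mixture_ge0 mixture_sigma_additive.

End mixture.

Section losses.
Local Open Scope ereal_scope.
Context (R : realType) (dX dY : measure_display)
  (X : measurableType dX) (Y : measurableType dY) (K : nat)
  (D : 'I_K -> probability (X * Y)%type R)
  (H : set (X -> Y)) (loss : Y -> Y -> R).

Definition groupLoss (j : 'I_K) (h : X -> Y) : \bar R :=
  \int[D j]_z (loss (h z.1) z.2)%:E.

Definition mixLoss (p : 'I_K -> R) (h : X -> Y) : \bar R :=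
  \int[mixture (fun j => D j) p]_z (loss (h z.1) z.2)%:E.

(* l^*(p) = min_{h in H} L_p(h) (written as an infimum; minima are assumed
   attained in the theorem, so it is a minimum). *)
Definition optLoss (p : 'I_K -> R) : \bar R :=
  ereal_inf [set mixLoss p h | h in H].

Definition argminGroup (j : 'I_K) : set (X -> Y) :=
  [set h | H h /\ forall h', H h' -> groupLoss j h <= groupLoss j h'].

Definition oracle_equivalent (Kstar : set 'I_K) : Prop :=
  exists h, (forall j, Kstar j -> argminGroup j h) /\
    (forall j1 j2, Kstar j1 -> Kstar j2 -> groupLoss j1 h = groupLoss j2 h).

End losses.

(* On the segment from e_k to e_k' the mixture weights are (1 - alpha, alpha),
   so L_p(h) = (1 - alpha) L_k(h) + alpha L_k'(h) and l^* restricted to the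
   segment is the lower envelope of these affine functions of alpha.  A common
   minimizer h of L_k and L_k' with L_k(h) = L_k'(h) = c keeps every affine
   function above c while its own one equals c.  Conversely, if the envelope
   is constantly c, its values at alpha = 0 and 1 give c <= L_k, L_k' on H,
   and a minimizer h at alpha = 1/2 has (L_k(h) + L_k'(h)) / 2 = c, which
   forces L_k(h) = L_k'(h) = c. *)

From HB Require Import structures.
From mathcomp Require Import all_boot all_order all_algebra.
From mathcomp Require Import all_classical all_reals all_analysis.
From mathcomp Require Import measurable_realfun lra.
Set Implicit Arguments.
Unset Strict Implicit.
Unset Printing Implicit Defensive.
Import Order.TTheory GRing.Theory Num.Theory.
Local Open Scope classical_set_scope.
Local Open Scope ring_scope.

Section mixture_integral.
Local Open Scope ereal_scope.
Context d (T : measurableType d) (R : realType) (K : nat)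
  (D : 'I_K -> {measure set T -> \bar R}) (p : 'I_K -> R).

Let weight_ge0 j : (0 <= Num.max (p j) 0)%R.
Proof. by rewrite le_max lexx orbT. Qed.

Let component (n : nat) : {measure set T -> \bar R} :=
  if insub n is Some j then mscale (NngNum (weight_ge0 j)) (D j) else mzero.

Let componentE (j : 'I_K) : component j = mscale (NngNum (weight_ge0 j)) (D j).
Proof. by rewrite /component valK. Qed.

Lemma mixture_msum A : mixture D p A = msum component K A.
Proof. by rewrite /msum; apply: eq_bigr => j _; rewrite componentE. Qed.

Lemma ge0_integral_mixture (f : T -> \bar R) :
  (forall x, 0 <= f x) -> measurable_fun [set: T] f ->
  \int[mixture D p]_x f x =
    \sum_(j < K) (Num.max (p j) 0%R)%:E * \int[D j]_x f x.
Proof.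
move=> f0 mf; rewrite (eq_measure_integral (msum component K)); last first.
  by move=> A _ _; exact: mixture_msum.
rewrite ge0_integral_measure_sum//; apply: eq_bigr => j _.
by rewrite componentE ge0_integral_mscale.
Qed.

Lemma integral_mixture (f : T -> \bar R) :
  measurable_fun [set: T] f -> (forall j, (D j).-integrable [set: T] f) ->
  \int[mixture D p]_x f x =
    \sum_(j < K) (Num.max (p j) 0%R)%:E * \int[D j]_x f x.
Proof.
move=> mf fint; rewrite integralE.
rewrite ge0_integral_mixture//; last exact: measurable_funepos.
rewrite ge0_integral_mixture//; last exact: measurable_funeneg.
have posE j : \int[D j]_x f^\+ x = (fine (\int[D j]_x f^\+ x))%:E.
  by rewrite fineK// integrable_pos_fin_num.
have negE j : \int[D j]_x f^\- x = (fine (\int[D j]_x f^\- x))%:E.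
  by rewrite fineK// integrable_neg_fin_num.
under eq_bigr => j _ do rewrite posE -EFinM.
under [X in _ - X = _]eq_bigr => j _ do rewrite negE -EFinM.
under [RHS]eq_bigr => j _ do rewrite integralE posE negE -EFinB -EFinM.
rewrite !sumEFin -EFinB -sumrB; congr EFin.
by apply: eq_bigr => j _; rewrite mulrBr.
Qed.

End mixture_integral.

Section segment.
Context (R : realType) (K : nat) (k k' : 'I_K).

Definition segment (alpha : R) : 'I_K -> R :=
  fun i => (1 - alpha) * vertex R k i + alpha * vertex R k' i.

Lemma sum_vertex_mul (j : 'I_K) (x : 'I_K -> R) :
  \sum_(i < K) vertex R j i * x i = x j.
Proof.
rewrite (bigD1 j)//= big1 => [|i /negbTE ij]; last by rewrite /vertex ij mul0r.
by rewrite /vertex eqxx mul1r addr0.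
Qed.

Lemma sum_segment_mul alpha (x : 'I_K -> R) :
  \sum_(i < K) segment alpha i * x i = (1 - alpha) * x k + alpha * x k'.
Proof.
under eq_bigr do rewrite mulrDl -!mulrA.
by rewrite big_split /= -!mulr_sumr !sum_vertex_mul.
Qed.

Lemma segment_ge0 alpha : 0 <= alpha <= 1 -> forall i, 0 <= segment alpha i.
Proof.
move=> /andP[a0 a1] i.
by apply: addr_ge0; apply: mulr_ge0; rewrite /vertex ?ler0n ?subr_ge0.
Qed.

Lemma segment_simplex alpha : 0 <= alpha <= 1 -> simplex R K (segment alpha).
Proof.
move=> a01; split; first exact: segment_ge0.
under eq_bigr do rewrite -[segment _ _]mulr1.
by rewrite sum_segment_mul !mulr1 subrK.
Qed.

End segment.

Lemma invr2_itv01 (R : realFieldType) : 0 <= (2^-1 : R) <= 1.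
Proof. by apply/andP; split; lra. Qed.

Section common_minimizer.
Context (R : realType) (A : Type) (S : set A) (f g : A -> R).

Definition blend_inf (alpha : R) : \bar R :=
  ereal_inf [set ((1 - alpha) * f x + alpha * g x)%:E | x in S].

Definition common_minimizer (x : A) : Prop :=
  [/\ S x, forall y, S y -> f x <= f y, forall y, S y -> g x <= g y
    & f x = g x].

Lemma blend_inf_common_minimizer x alpha :
  common_minimizer x -> 0 <= alpha <= 1 -> blend_inf alpha = (f x)%:E.
Proof.
move=> [Sx fmin gmin fg] /andP[a0 a1].
have fxE : f x = (1 - alpha) * f x + alpha * g x.
  by rewrite -fg -mulrDl subrK mul1r.
apply/le_anti/andP; split.
  by apply: ereal_inf_lbound; exists x => //; rewrite -fxE.
apply/ereal_infP => _ [y Sy <-].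
by rewrite fxE lee_fin lerD// ler_wpM2l ?subr_ge0 ?fmin ?gmin.
Qed.

Lemma const_blend_inf_common_minimizer (c : \bar R) x :
  (forall alpha, 0 <= alpha <= 1 -> blend_inf alpha = c) ->
  S x -> (forall y, S y -> f x + g x <= f y + g y) -> common_minimizer x.
Proof.
move=> cE Sx xmin.
have c_lb alpha y : 0 <= alpha -> alpha <= 1 -> S y ->
    (c <= ((1 - alpha) * f y + alpha * g y)%:E)%E.
  move=> a0 a1 Sy; rewrite -(cE alpha); last exact/andP.
  by apply: ereal_inf_lbound; exists y.
have c_lb_f y : S y -> (c <= (f y)%:E)%E.
  by move=> /(c_lb 0 y (lexx 0) ler01); rewrite subr0 mul1r mul0r addr0.
have c_lb_g y : S y -> (c <= (g y)%:E)%E.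
  by move=> /(c_lb 1 y ler01 (lexx 1)); rewrite subrr mul0r mul1r add0r.
have cx : c = ((1 - 2^-1) * f x + 2^-1 * g x)%:E.
  rewrite -(cE _ (invr2_itv01 R)); apply/le_anti/andP; split.
    by apply: ereal_inf_lbound; exists x.
  apply/ereal_infP => _ [y Sy <-]; rewrite lee_fin.
  by have := xmin y Sy; lra.
have := c_lb_f x Sx; have := c_lb_g x Sx; rewrite cx !lee_fin => gx fx.
have fg : f x = g x by lra.
split=> // y Sy.
- by have := c_lb_f y Sy; rewrite cx lee_fin; lra.
- by have := c_lb_g y Sy; rewrite cx lee_fin; lra.
Qed.

End common_minimizer.

Section group_losses.
Context (R : realType) (dX dY : measure_display)
  (X : measurableType dX) (Y : measurableType dY) (K : nat)
  (D : 'I_K -> probability (X * Y)%type R)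
  (H : set (X -> Y)) (loss : Y -> Y -> R).
Hypothesis loss_integrable : forall j h, H h ->
  (D j).-integrable [set: X * Y] (fun z => (loss (h z.1) z.2)%:E).

Definition groupLossR j h : R := fine (groupLoss D loss j h).

Lemma groupLossE j h : H h -> groupLoss D loss j h = (groupLossR j h)%:E.
Proof. by move=> Hh; rewrite fineK// integrable_fin_num// loss_integrable. Qed.

Lemma mixLoss_segment k k' alpha h : 0 <= alpha <= 1 -> H h ->
  mixLoss D loss (segment k k' alpha) h =
  ((1 - alpha) * groupLossR k h + alpha * groupLossR k' h)%:E.
Proof.
move=> a01 Hh; have /integrableP[mloss _] := loss_integrable k Hh.
rewrite /mixLoss integral_mixture//; last by move=> j; exact: loss_integrable.
under eq_bigr => j _.
  rewrite (max_idPl (segment_ge0 k k' a01 j)) -/(groupLoss D loss j h).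
  rewrite groupLossE// -EFinM.
  over.
by rewrite sumEFin sum_segment_mul.
Qed.

Lemma optLoss_segment k k' alpha : 0 <= alpha <= 1 ->
  optLoss D H loss (segment k k' alpha) =
  blend_inf H (groupLossR k) (groupLossR k') alpha.
Proof.
move=> a01; congr ereal_inf; apply/seteqP.
by split=> _ [h Hh <-]; exists h => //; rewrite mixLoss_segment.
Qed.

Lemma oracle_equivalent_pair k k' :
  oracle_equivalent D H loss [set k; k'] <->
  exists h, common_minimizer H (groupLossR k) (groupLossR k') h.
Proof.
split=> [[h [hmin heq]]|[h [Hh kmin k'min kk']]].
- have [Hh kmin] := hmin k (or_introl erefl).
  have [_ k'min] := hmin k' (or_intror erefl).
  exists h; split=> // [h' Hh'|h' Hh'|].
  + by have := kmin h' Hh'; rewrite !groupLossE// lee_fin.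
  + by have := k'min h' Hh'; rewrite !groupLossE// lee_fin.
  + by rewrite /groupLossR (heq k k' (or_introl erefl) (or_intror erefl)).
- exists h; split.
  + move=> j [->|->]; split=> // h' Hh'; rewrite !groupLossE// lee_fin.
      exact: kmin.
    exact: k'min.
  + by move=> j1 j2 [->|->] [->|->]; rewrite !groupLossE// kk'.
Qed.

End group_losses.

Theorem proposition8 (R : realType) (dX dY : measure_display)
  (X : measurableType dX) (Y : measurableType dY) (K : nat)
  (D : 'I_K -> probability (X * Y)%type R)
  (H : set (X -> Y)) (loss : Y -> Y -> R)
  (Hint : forall (j : 'I_K) (h : X -> Y), H h ->
     (D j).-integrable setT (fun z => (loss (h z.1) z.2)%:E))
  (Hattained : forall p : 'I_K -> R, simplex R K p ->
     exists2 h, H h &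
       forall h', H h' -> (mixLoss D loss p h <= mixLoss D loss p h')%E)
  (k k' : 'I_K) :
  oracle_equivalent D H loss [set k; k'] <->
  exists c : \bar R, forall alpha : R, 0 <= alpha <= 1 ->
    optLoss D H loss
      (fun i => (1 - alpha) * vertex R k i + alpha * vertex R k' i) = c.
Proof.
rewrite (oracle_equivalent_pair Hint); split=> [[h hmin]|[c cE]].
- exists (groupLossR D loss k h)%:E => alpha a01.
  by rewrite (optLoss_segment Hint k k' a01) (blend_inf_common_minimizer hmin).
- have [h Hh hmin] := Hattained _ (segment_simplex k k' (invr2_itv01 R)).
  exists h; apply: (const_blend_inf_common_minimizer (c := c)) => //.
  + by move=> alpha a01; rewrite -(optLoss_segment Hint k k' a01); exact: cE.
  + move=> h' Hh'; have := hmin h' Hh'.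
    by rewrite !(mixLoss_segment Hint k k' (invr2_itv01 R))// lee_fin; lra.
Qed.
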